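(* Let $a,b$ be positive integers, and let $m,n$ be coprime positive integers with $\dfrac{\sigma(a)}{\sigma(b)}=\dfrac{m}{n}$. Let $x$ be a positive integer such that $p=nx-1$ and $q=mx-1$ are primes, and let $z$ be a positive integer such that $z,a,p$ are pairwise coprime and $z,b,q$ are pairwise coprime. Then: (i) $zap$ and $zbq$ are amicable if and only if $$\frac{z}{\sigma(z)}=\frac{nx\,\sigma(a)}{(na+mb)x-a-b}.$$ (ii) If $zap$ and $zbq$ are amicable and the fraction $\dfrac{nx\,\sigma(a)}{(na+mb)x-a-b}$ is written in lowest terms as $\dfrac{r}{s}$, then $z$ is deficient ($\sigma(z)<2z$), $r$ divides $z$, $s\ge\sigma(r)$, if $s=\sigma(r)$ then $z=r$, and $r$ is deficient ($\sigma(r)<2r$).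
   Context: For a positive integer $N$, $\sigma(N)$ denotes the sum of all positive divisors of $N$. Positive integers $M,N$ are amicable if $\sigma(M)-M=N$ and $\sigma(N)-N=M$ (equivalently $\sigma(M)=\sigma(N)=M+N$). A positive integer $N$ is deficient if $\sigma(N)<2N$. *)

From mathcomp Require Import all_boot all_order all_algebra.
Set Implicit Arguments. Unset Strict Implicit. Unset Printing Implicit Defensive.

(* sum of all positive divisors of N (divisors 0 = [::], so sigma 0 = 0) *)
Definition sigma (N : nat) : nat := \sum_(d <- divisors N) d.

Definition amicable (M N : nat) : Prop :=
  sigma M - M = N /\ sigma N - N = M.

Definition deficient (N : nat) : Prop := sigma N < 2 * N.

From mathcomp Require Import all_boot all_order all_algebra.
From mathcomp Require Import zify.

(* Since p = nx - 1 and q = mx - 1 are primes coprime to the other factors,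
   sigma(zap) = sigma(z) sigma(a) nx and sigma(zbq) = sigma(z) sigma(b) mx, which
   agree because sigma(a)/sigma(b) = m/n.  As zap + zbq = z((na+mb)x - a - b),
   amicability says exactly that z/sigma(z) = F; and F > 1/2 since
   nax + mbx <= nx sigma(a) + mx sigma(b), so z is deficient.
   If z = tr with t > 1, the numbers td (d | r) and 1 are distinct divisors of z,
   so t sigma(r) < sigma(z).  Writing z/sigma(z) = r/s in lowest terms gives r | z
   and sigma(z) = ts, hence sigma(r) <= s with equality only for z = r; and
   divisors of deficient numbers are deficient. *)

Lemma leq_sum_subset (s s' : seq nat) (F : nat -> nat) :
  uniq s -> uniq s' -> {subset s <= s'} ->
  \sum_(i <- s) F i <= \sum_(i <- s') F i.
Proof. exact: (uniq_sub_le_big leqnn (fun m n => leq_addr n m)). Qed.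

Lemma sigma1 : sigma 1 = 1.
Proof. by rewrite /sigma big_seq1. Qed.

Lemma leq_sigma [n] : 0 < n -> n <= sigma n.
Proof.
move=> n_gt0; rewrite /sigma -{1}(big_seq1 addn n id).
apply: leq_sum_subset; rewrite ?divisors_uniq // => d.
by rewrite inE => /eqP ->; apply: divisors_id.
Qed.

Lemma sigma_prime [p] : prime p -> sigma p = p.+1.
Proof.
move=> p_pr; rewrite /sigma (perm_big [:: 1; p]) /=.
  by rewrite big_cons big_seq1 add1n.
apply: uniq_perm; rewrite ?divisors_uniq //=.
  by rewrite inE andbT neq_ltn prime_gt1.
case/primeP: (p_pr) => _ p_div d.
rewrite -dvdn_divisors ?prime_gt0 // !inE.
by apply/idP/orP => [/p_div/orP// | [] /eqP ->]; rewrite ?dvd1n ?dvdnn.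
Qed.

Lemma gcdn_coprime_dvd_mul [u v d e] :
  coprime u v -> d %| u -> e %| v -> gcdn u (d * e) = d.
Proof.
move=> cuv du ev; rewrite Gauss_gcdl; first exact/gcdn_idPr.
exact: coprime_dvdr ev cuv.
Qed.

Lemma dvdn_coprime_mulE u v d :
  coprime u v -> d %| u * v -> d = gcdn d u * gcdn d v.
Proof.
move=> cuv duv; apply/eqP; rewrite eqn_dvd; apply/andP; split.
  have dd := dvdnn d.
  by rewrite muln_gcdl !muln_gcdr !dvdn_gcd duv !(dvdn_mulr _ dd) dvdn_mull.
rewrite Gauss_dvd ?dvdn_gcdl //.
exact: coprime_dvdl (dvdn_gcdr _ _) (coprime_dvdr (dvdn_gcdr _ _) cuv).
Qed.

Lemma perm_divisors_coprime [u v] : coprime u v -> 0 < u -> 0 < v ->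
  perm_eq (divisors (u * v)) [seq d * e | d <- divisors u, e <- divisors v].
Proof.
move=> cuv u_gt0 v_gt0; have uv_gt0 : 0 < u * v by rewrite muln_gt0 u_gt0.
apply: uniq_perm; rewrite ?divisors_uniq //.
  apply: allpairs_uniq; rewrite ?divisors_uniq // => -[d e] [d' e'].
  move=> /allpairsP[[d1 e1] [/= + + [-> ->]]] /allpairsP[[d2 e2] [/= + + [-> ->]]].
  rewrite -!dvdn_divisors // => d1u e1v d2u e2v /= de_eq.
  have vu : coprime v u by rewrite coprime_sym.
  congr (_, _).
    by rewrite -(gcdn_coprime_dvd_mul cuv d1u e1v) de_eq
               (gcdn_coprime_dvd_mul cuv d2u e2v).
  by rewrite -(gcdn_coprime_dvd_mul vu e1v d1u) mulnC de_eq mulnC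
             (gcdn_coprime_dvd_mul vu e2v d2u).
move=> k; rewrite -dvdn_divisors //; apply/idP/allpairsP => [kuv | ].
  exists (gcdn k u, gcdn k v); rewrite -!dvdn_divisors ?dvdn_gcdr //.
  by split; last exact: dvdn_coprime_mulE.
by move=> [[d e] /=]; rewrite -!dvdn_divisors // => -[du ev ->]; apply: dvdn_mul.
Qed.

(* No positivity is needed: [coprime 0 v] forces [v = 1], and [divisors 0 = [:: 1]]. *)
Lemma sigmaM u v : coprime u v -> sigma (u * v) = sigma u * sigma v.
Proof.
move=> cuv; have [u0 | u_gt0] := posnP u.
  by move: cuv; rewrite u0 /coprime gcd0n => /eqP ->; rewrite muln1 sigma1 muln1.
have [v0 | v_gt0] := posnP v.
  by move: cuv; rewrite v0 /coprime gcdn0 => /eqP ->; rewrite mul1n sigma1 mul1n.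
rewrite /sigma (perm_big _ (perm_divisors_coprime cuv u_gt0 v_gt0)).
rewrite big_allpairs_dep big_distrl; apply: eq_bigr => d _.
by rewrite big_distrr.
Qed.

Lemma ltn_mul_sigma [t r] : 0 < r -> 1 < t -> t * sigma r < sigma (t * r).
Proof.
move=> r_gt0 t_gt1; have t_gt0 := ltnW t_gt1.
have tr_gt0 : 0 < t * r by rewrite muln_gt0 t_gt0.
rewrite /sigma big_distrr /= -(big_map (muln t) xpredT id).
apply: (@leq_trans (\sum_(k <- 1 :: map (muln t) (divisors r)) k)).
  by rewrite big_cons.
apply: leq_sum_subset; rewrite ?divisors_uniq //=.
  rewrite map_inj_uniq ?divisors_uniq ?andbT; last first.
    by move=> d1 d2 /eqP; rewrite eqn_pmul2l // => /eqP.
  apply/mapP => -[d _ /esym/eqP]; rewrite muln_eq1 => /andP[/eqP t1 _].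
  by rewrite t1 in t_gt1.
move=> k; rewrite inE => /orP[/eqP -> | /mapP[d dr ->]]; first exact: divisor1.
by rewrite -dvdn_divisors // dvdn_pmul2l // dvdn_divisors.
Qed.

Lemma leq_mul_sigma t [r] : 0 < r -> t * sigma r <= sigma (t * r).
Proof.
move=> r_gt0; case: t => [|[|t]]; rewrite ?mul0n ?mul1n //.
exact/ltnW/ltn_mul_sigma.
Qed.

Lemma deficient_dvd [z r] : 0 < z -> r %| z -> deficient z -> deficient r.
Proof.
move=> z_gt0 /dvdnP[t zt]; rewrite /deficient zt => def_tr.
have [t_gt0 r_gt0] : 0 < t /\ 0 < r by move: z_gt0; rewrite zt muln_gt0 => /andP.
rewrite -(ltn_pmul2l t_gt0) mulnCA; exact: leq_ltn_trans (leq_mul_sigma t r_gt0) def_tr.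
Qed.

Lemma deficient_of_abundancy [z k d] : 0 < z ->
  sigma z * k = z * d -> d < 2 * k -> deficient z.
Proof.
move=> z_gt0 eq_zk lt_dk; have k_gt0 : 0 < k by case: k lt_dk {eq_zk}.
by rewrite /deficient -(ltn_pmul2r k_gt0) eq_zk -mulnA mulnCA ltn_pmul2l.
Qed.

Lemma lowest_terms_abundancy [z r s] : 0 < z -> coprime r s ->
  z * s = r * sigma z -> [/\ r %| z, sigma r <= s & (s = sigma r -> z = r)].
Proof.
move=> z_gt0 crs zs.
have r_gt0 : 0 < r.
  rewrite lt0n; apply: contraTneq crs => r0.
  by move: zs; rewrite r0 mul0n => /eqP; rewrite muln_eq0 eqn0Ngt z_gt0 /= => /eqP ->.
have r_dvd_z : r %| z by rewrite -(Gauss_dvdl _ crs) zs dvdn_mulr.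
case/dvdnP: (r_dvd_z) => t zt.
have t_gt0 : 0 < t by move: z_gt0; rewrite zt muln_gt0 => /andP[].
have sigma_tr : sigma (t * r) = t * s.
  by apply/eqP; rewrite -(eqn_pmul2l r_gt0) -zt -zs zt mulnCA mulnA.
have le_sr : sigma r <= s.
  by rewrite -(leq_pmul2l t_gt0) -sigma_tr leq_mul_sigma.
split=> // s_eq; rewrite zt.
have [t_gt1 | t_le1] := ltnP 1 t.
  by have := ltn_mul_sigma r_gt0 t_gt1; rewrite sigma_tr -s_eq ltnn.
by rewrite (_ : t = 1) ?mul1n //; apply/anti_leq; rewrite t_le1.
Qed.

Lemma amicable_sigmaE M N S : 0 < M -> 0 < N ->
  sigma M = S -> sigma N = S -> amicable M N <-> S = M + N.
Proof. move=> /leq_sigma leM /leq_sigma leN sM sN; rewrite /amicable; lia. Qed.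

Import GRing.Theory Num.Theory.

Lemma eqr_div_nat {R : numFieldType} [u v u' v' : nat] :
  (0 < v)%N -> (0 < v')%N ->
  (u%:R / v%:R = u'%:R / v'%:R :> R)%R <-> u * v' = u' * v.
Proof.
move=> v_gt0 v'_gt0.
have nat_neq0 w : 0 < w -> (w%:R != 0 :> R)%R by rewrite pnatr_eq0 -lt0n.
split=> [/eqP | eq_uv]; last by apply/eqP; rewrite eqr_div ?nat_neq0 // -!natrM eq_uv.
by rewrite eqr_div ?nat_neq0 // -!natrM eqr_nat => /eqP.
Qed.

Lemma sigma_mul_pred_prime u k :
  prime (k - 1) -> coprime u (k - 1) -> sigma (u * (k - 1)) = sigma u * k.
Proof.
move=> p_pr cup; rewrite sigmaM // (sigma_prime p_pr); congr (_ * _).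
by have := prime_gt1 p_pr; lia.
Qed.

Section PrimeAmicableConstruction.

Context {a b m n x z : nat}.
Hypotheses (a_gt0 : 0 < a) (b_gt0 : 0 < b) (z_gt0 : 0 < z).
Hypothesis sigma_ab : sigma a * n = m * sigma b.
Hypotheses (p_pr : prime (n * x - 1)) (q_pr : prime (m * x - 1)).
Hypotheses (cza : coprime z a) (czp : coprime z (n * x - 1)).
Hypothesis cap : coprime a (n * x - 1).
Hypotheses (czb : coprime z b) (czq : coprime z (m * x - 1)).
Hypothesis cbq : coprime b (m * x - 1).

Local Notation zap := (z * a * (n * x - 1)).
Local Notation zbq := (z * b * (m * x - 1)).
Local Notation K := (n * x * sigma a).
Local Notation D := ((n * a + m * b) * x - a - b).

Let nx_gt2 : 2 < n * x.
Proof. have := prime_gt1 p_pr; lia. Qed.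

Let mx_gt2 : 2 < m * x.
Proof. have := prime_gt1 q_pr; lia. Qed.

Let ab_lt : a + b < (n * a + m * b) * x.
Proof. have := leq_mul nx_gt2 (leqnn a); have := leq_mul mx_gt2 (leqnn b); nia. Qed.

Let sigma_zap : sigma zap = sigma z * K.
Proof.
rewrite sigma_mul_pred_prime ?coprimeMl ?czp ?cap // sigmaM //.
by rewrite -mulnA [sigma a * _]mulnC.
Qed.

Let sigma_zbq : sigma zbq = sigma z * K.
Proof.
rewrite sigma_mul_pred_prime ?coprimeMl ?czq ?cbq // sigmaM // -mulnA.
by congr (_ * _); rewrite mulnA [sigma b * m]mulnC -sigma_ab -mulnA mulnC.
Qed.

Let amicableE : amicable zap zbq <-> sigma z * K = z * D.
Proof.
have sum_zD : zap + zbq = z * D by nia.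
by rewrite -sum_zD; apply: amicable_sigmaE => //; rewrite !muln_gt0 ?z_gt0 /=; lia.
Qed.

Lemma amicable_iff_abundancy :
  amicable zap zbq <->
  (z%:R / (sigma z)%:R = K%:R / (((n * a + m * b) * x)%:R - a%:R - b%:R) :> rat)%R.
Proof.
have sz_gt0 := leq_trans z_gt0 (leq_sigma z_gt0).
rewrite amicableE -natrB -?natrB; try lia.
rewrite eqr_div_nat //; last lia.
by rewrite [sigma z * _]mulnC; split=> ->.
Qed.

Lemma amicable_deficient : amicable zap zbq -> deficient z.
Proof.
move=> /amicableE /(deficient_of_abundancy z_gt0); apply.
have := leq_mul (leq_sigma a_gt0) (leqnn (n * x)).
have := leq_mul (leq_sigma b_gt0) (leqnn (m * x)).
nia.
Qed.

End PrimeAmicableConstruction.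

Local Open Scope ring_scope.

Theorem mainTheorem11 (a b m n x z : nat) :
  (0 < a)%N -> (0 < b)%N -> (0 < m)%N -> (0 < n)%N -> coprime m n ->
  (sigma a)%:R / (sigma b)%:R = m%:R / n%:R :> rat ->
  (0 < x)%N -> prime (n * x - 1) -> prime (m * x - 1) ->
  (0 < z)%N ->
  coprime z a -> coprime z (n * x - 1) -> coprime a (n * x - 1) ->
  coprime z b -> coprime z (m * x - 1) -> coprime b (m * x - 1) ->
  let F : rat := (n * x * sigma a)%:R /
                 (((n * a + m * b) * x)%:R - a%:R - b%:R) in
  (amicable (z * a * (n * x - 1)) (z * b * (m * x - 1))
     <-> z%:R / (sigma z)%:R = F)
  /\
  (amicable (z * a * (n * x - 1)) (z * b * (m * x - 1)) ->
   forall r s : nat, (0 < s)%N -> coprime r s -> r%:R / s%:R = F ->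
     [/\ deficient z, (r %| z)%N, (sigma r <= s)%N,
         (s = sigma r -> z = r) & deficient r]).
Proof.
move=> a_gt0 b_gt0 _ n_gt0 _ sigma_ab_rat _ p_pr q_pr z_gt0.
move=> cza czp cap czb czq cbq F.
have sigma_ab : (sigma a * n = m * sigma b)%N.
  exact: (eqr_div_nat (leq_trans b_gt0 (leq_sigma b_gt0)) n_gt0).1 sigma_ab_rat.
have amicF := amicable_iff_abundancy
  a_gt0 b_gt0 z_gt0 sigma_ab p_pr q_pr cza czp cap czb czq cbq.
have def_z := amicable_deficient
  a_gt0 b_gt0 z_gt0 sigma_ab p_pr q_pr cza czp cap czb czq cbq.
split=> // amic r s s_gt0 crs rF.
have zs : (z * s = r * sigma z)%N.
  apply: (eqr_div_nat (leq_trans z_gt0 (leq_sigma z_gt0)) s_gt0).1.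
  exact: etrans (amicF.1 amic) (esym rF).
have [r_dvd_z le_sr eq_sr] := lowest_terms_abundancy z_gt0 crs zs.
by split=> //; [apply: def_z | apply: deficient_dvd z_gt0 r_dvd_z (def_z amic)].
Qed.
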